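(* For every $k\in\mathcal K^{(\ell)}$, $$\chi_k=-\sum_{k'\in\mathcal K^{(\ell)}}\langle f_{-k'},p^T_k\rangle\chi_{-k'}+\sum_{k'\in\mathcal K^{(\ell_L)}}\langle f^L_{k'},p^T_k\rangle\chi^L_{k'}+\sum_{k'\in\mathcal K^{(\ell_R)}}\langle f^R_{k'},p^T_k\rangle\chi^R_{k'};$$ for every $k\in\mathcal K^{(\ell_L)}$, $$\chi^L_{-k}=\sum_{k'\in\mathcal K^{(\ell)}}\langle f_{-k'},p^L_k\rangle\chi_{-k'}-\sum_{k'\in\mathcal K^{(\ell_L)}}\langle f^L_{k'},p^L_k\rangle\chi^L_{k'}-\sum_{k'\in\mathcal K^{(\ell_R)}}\langle f^R_{k'},p^L_k\rangle\chi^R_{k'};$$ and for every $k\in\mathcal K^{(\ell_R)}$, $$\chi^R_{-k}=\sum_{k'\in\mathcal K^{(\ell)}}\langle f_{-k'},p^R_k\rangle\chi_{-k'}-\sum_{k'\in\mathcal K^{(\ell_L)}}\langle f^L_{k'},p^R_k\rangle\chi^L_{k'}-\sum_{k'\in\mathcal K^{(\ell_R)}}\langle f^R_{k'},p^R_k\rangle\chi^R_{k'}.$$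
   Context: Fix integers $a<0<b$, $\ell=b-a$, $\ell_L=-a$, $\ell_R=b$; $\mathcal K^{(n)}=\{\frac12,\dots,n-\frac12\}$. $C=\{a,\dots,b\}$, $C^*=\{a+\frac12,\dots,b-\frac12\}$, $C^*_L=\{a+\frac12,\dots,-\frac12\}$, $C^*_R=\{\frac12,\dots,b-\frac12\}$. $\tilde V$ has basis $(e_\rho)_{\rho\in\{\pm1\}^C}$; for $x'\in C^*$, $\varsigma_{x'}(\rho)$ flips signs of $\rho_x$, $x<x'$; $\psi_{x'}e_\rho=\frac{-\rho_{x'-1/2}+i\rho_{x'+1/2}}{\sqrt2}e_{\varsigma_{x'}(\rho)}$, $\psi^*_{x'}e_\rho=\frac{-i\rho_{x'-1/2}+\rho_{x'+1/2}}{\sqrt2}e_{\varsigma_{x'}(\rho)}$. Eigenfunctions: for integers $a'<b'$, $n=b'-a'$, on the lattice strip $\{a',\dots,b'\}\times\mathbb Z\subset\mathbb C$ (nearest-neighbour edges identified with midpoints), $F$ is s-holomorphic if $F(z_1)+\frac{i|v-p|}{v-p}\overline{F(z_1)}=F(z_2)+\frac{i|v-p|}{v-p}\overline{F(z_2)}$ for edges adjacent to a common vertex $v$ and face $p$, with Riemann boundary values if $F(a'+iy')\in e^{-i\pi/4}\mathbb R$, $F(b'+iy')\in e^{i\pi/4}\mathbb R$. For $k\in\mathcal K^{(n)}$, $\omega_k\in((k-\frac12)\pi/n,k\pi/n)$ solves $\cos((n+\frac12)\omega)/\cos((n-\frac12)\omega)=3-2\sqrt2$, $\lambda_{\pm k}=(2-\cos\omega_k+\sqrt{(3-\cos\omega_k)(1-\cos\omega_k)})^{\pm1}$;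 $F_{\pm k}$ is the unique s-holomorphic function with Riemann boundary values, $F_{\pm k}(z+ih)=\lambda_{\pm k}^hF_{\pm k}(z)$, values in $e^{-i\pi/4}\mathbb R_{>0}$ on edges $a'+iy'$, and unit $\ell^2$-norm restriction to the height-0 horizontal edges. $f_{\pm k}$ ($k\in\mathcal K^{(\ell)}$): restrictions for $(a,b)$; $f^L_{\pm k}$ ($k\in\mathcal K^{(\ell_L)}$): for $(a,0)$; $f^R_{\pm k}$ ($k\in\mathcal K^{(\ell_R)}$): for $(0,b)$; the latter two are extended by zero to $C^*$. Function space: $H=\mathbb C^{C^*}$, real Hilbert space with $\langle f,g\rangle=\mathrm{Re}\sum_{x'\in C^*}f(x')\overline{g(x')}$. Known facts: $(f_k)_{k\in\pm\mathcal K^{(\ell)}}$ is an orthonormal basis of $H$; $(f^L_k)_{k\in\pm\mathcal K^{(\ell_L)}}$ and $(f^R_k)_{k\in\pm\mathcal K^{(\ell_R)}}$ are orthonormal bases of the subspaces of functions supported on $C^*_L$, resp. $C^*_R$. $\Pi_{T;pole},\Pi_{L;pole},\Pi_{R;pole}$ are the orthogonal projections onto $\mathrm{span}\{f_{+k}:k\in\mathcal K^{(\ell)}\}$, $\mathrm{span}\{f^L_{-k}:k\in\mathcal K^{(\ell_L)}\}$, $\mathrm{span}\{f^R_{-k}:k\in\mathcal K^{(\ell_R)}\}$. Pole functions: $p^T_k,p^L_k,p^R_k\in H$ are the unique elements with $(\Pi_{T;pole},\Pi_{L;pole},\Pi_{R;pole})(p^T_k)=(f_k,0,0)$, $(\Pi_{T;pole},\Pi_{L;pole},\Pi_{R;pole})(p^L_k)=(0,f^L_{-k},0)$,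 $(\Pi_{T;pole},\Pi_{L;pole},\Pi_{R;pole})(p^R_k)=(0,0,f^R_{-k})$. Modes: for $f\in H$, $\phi(f)=\frac{e^{i\pi/4}}{2}\sum_{x'\in C^*}(i f(x')\psi_{x'}-i\overline{f(x')}\psi^*_{x'})$; $\chi_k=\phi(f_k)$, $\chi^L_k=\phi(f^L_k)$, $\chi^R_k=\phi(f^R_k)$. *)

From HB Require Import structures.
From mathcomp Require Import all_boot all_order all_algebra.
From mathcomp Require Import complex.
From mathcomp Require Import reals trigo.

Set Implicit Arguments.
Unset Strict Implicit.
Unset Printing Implicit Defensive.

Import Order.TTheory GRing.Theory Num.Theory.
Local Open Scope ring_scope.
Local Open Scope complex_scope.

Section Defs.
Variable R : realType.
Local Notation C := R[i].

Definition half : R := 2^-1.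
Definition sqrt2 : R := Num.sqrt 2.

Definition eip4 : C := (sqrt2^-1) +i* (sqrt2^-1).
Definition eim4 : C := (sqrt2^-1) -i* (sqrt2^-1).

(* midpoint of the horizontal edge from x + iy to (x+1) + iy *)
Definition hedge (x y : int) : C := (x%:~R + half) +i* (y%:~R).
(* midpoint of the vertical edge from x + iy to x + i(y+1) *)
Definition vedge (x y : int) : C := (x%:~R) +i* (y%:~R + half).

(* s-holomorphicity on the strip {a',...,b'} x Z: for every vertex v = x+iy
   of the strip and every face p adjacent to v (p = v + (+-1/2) + i(+-1/2),
   inside the strip), the two edges z1 (horizontal) and z2 (vertical) adjacent
   to both v and p satisfy
     F z1 + i|v-p|/(v-p) conj(F z1) = F z2 + i|v-p|/(v-p) conj(F z2). *)
Definition s_holomorphic (a' b' : int) (F : C -> C) : Prop :=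
  forall (x y : int) (sx sy : bool),
    let xp := if sx then x else x - 1 in
    let yp := if sy then y else y - 1 in
    (a' <= x <= b')%R -> (a' <= xp)%R -> (xp < b')%R ->
    let v : C := (x%:~R) +i* (y%:~R) in
    let p : C := (xp%:~R + half) +i* (yp%:~R + half) in
    let c : C := 'i * `|v - p| / (v - p) in
    let z1 := hedge xp y in
    let z2 := vedge x yp in
    F z1 + c * (F z1)^* = F z2 + c * (F z2)^*.

Definition riemann_bv (a' b' : int) (F : C -> C) : Prop :=
  forall y : int,
    (exists r : R, F (vedge a' y) = r%:C * eim4) /\
    (exists r : R, F (vedge b' y) = r%:C * eip4).

(* The eigenfunction F_{+k} (plus = true) or F_{-k} (plus = false) of the strip
   {a',...,b'} x Z, n = b' - a', where k = m + 1/2 ranges over K^(n). *)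
Definition eigen_spec (a' b' : int) (plus : bool) (m : nat) (F : C -> C) : Prop :=
  let n : nat := absz (b' - a') in
  let nr : R := n%:R in
  exists w : R,
    m%:R * pi / nr < w /\ w < (m%:R + half) * pi / nr /\
    cos ((nr + half) * w) / cos ((nr - half) * w) = 3 - 2 * sqrt2 /\
    let Lam : R := 2 - cos w + Num.sqrt ((3 - cos w) * (1 - cos w)) in
    let lam : R := if plus then Lam else Lam^-1 in
    s_holomorphic a' b' F /\
    riemann_bv a' b' F /\
    (forall (x y h : int), (a' <= x)%R -> (x < b')%R ->
        F (hedge x y + 'i * (h%:~R)%:C) = (lam ^ h)%:C * F (hedge x y)) /\
    (forall (x y h : int), (a' <= x <= b')%R ->
        F (vedge x y + 'i * (h%:~R)%:C) = (lam ^ h)%:C * F (vedge x y)) /\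
    (forall y : int, exists2 r : R, 0 < r & F (vedge a' y) = r%:C * eim4) /\
    \sum_(j < n) `|F (hedge (a' + j%:Z) 0)| ^+ 2 = 1.

(* Dual points x' in C^* = {a+1/2,...,b-1/2} are indexed by j : 'I_(b-a),
   x' = a + j + 1/2. *)
Definition ell (a b : int) : nat := absz (b - a).
Definition Hsp (a b : int) := {ffun 'I_(ell a b) -> C}.

Definition restr (a b a' b' : int) (F : C -> C) : Hsp a b :=
  [ffun j : 'I_(ell a b) =>
     if ((a' <= a + (j : nat)%:Z) && (a + (j : nat)%:Z < b'))%R
     then F (hedge (a + (j : nat)%:Z) 0) else 0].

Definition inner (a b : int) (f g : Hsp a b) : R :=
  complex.Re (\sum_(j < ell a b) f j * (g j)^*).

Definition is_orth_proj (a b : int) (n : nat) (S : 'I_n -> Hsp a b)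
    (p q : Hsp a b) : Prop :=
  (exists c : 'I_n -> R, q = \sum_(i < n) (c i)%:C *: S i) /\
  (forall i : 'I_n, inner (p - q) (S i) = 0).

(* sites x in C = {a,...,b} indexed by i : 'I_(b-a+1), x = a + i;
   rho : {+-1}^C encoded as booleans (true = +1). *)
Definition Sconf (a b : int) := {ffun 'I_(ell a b).+1 -> bool}.
Definition Vt (a b : int) := {ffun Sconf a b -> C}.

Definition sgnR (s : bool) : R := if s then 1 else -1.

(* varsigma_{x'}: flip rho_x for x < x', i.e. i <= j *)
Definition varsigma (a b : int) (j : 'I_(ell a b)) (rho : Sconf a b)
    : Sconf a b :=
  [ffun i : 'I_(ell a b).+1 => if (i <= j)%N then ~~ rho i else rho i].

Definition rho_l (a b : int) (j : 'I_(ell a b)) (rho : Sconf a b) : R :=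
  sgnR (rho (inord j)).
Definition rho_r (a b : int) (j : 'I_(ell a b)) (rho : Sconf a b) : R :=
  sgnR (rho (inord j.+1)).

Definition coef_psi (a b : int) (j : 'I_(ell a b)) (rho : Sconf a b) : C :=
  ((- rho_l j rho)%:C + 'i * (rho_r j rho)%:C) / sqrt2%:C.
Definition coef_psis (a b : int) (j : 'I_(ell a b)) (rho : Sconf a b) : C :=
  (- 'i * (rho_l j rho)%:C + (rho_r j rho)%:C) / sqrt2%:C.

(* linear extension of e_rho |-> coef(rho) e_{varsigma(rho)}; varsigma is an
   involution, so the coefficient at sigma comes from rho = varsigma(sigma) *)
Definition psi (a b : int) (j : 'I_(ell a b)) (v : Vt a b) : Vt a b :=
  [ffun sigma => coef_psi j (varsigma j sigma) * v (varsigma j sigma)].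
Definition psis (a b : int) (j : 'I_(ell a b)) (v : Vt a b) : Vt a b :=
  [ffun sigma => coef_psis j (varsigma j sigma) * v (varsigma j sigma)].

Definition phi (a b : int) (f : Hsp a b) (v : Vt a b) : Vt a b :=
  (eip4 / 2%:R) *:
    \sum_(j < ell a b) (('i * f j) *: psi j v - ('i * (f j)^*) *: psis j v).

End Defs.

(* The restrictions [f_{+-k}] are orthonormal.  For s-holomorphic [F], [G] on
   a strip with [F (z + i) = lambda F z] and [G (z + i) = mu G z], the four
   corner relations around a face give
     [(mu - lambda) Re (F conj G)] on the bottom edge
       = [Im (F conj G)] on the right edge - [Im (F conj G)] on the left edge;
   summed across the strip this telescopes to boundary terms, which vanish by
   the Riemann boundary values, and the [lambda_{+-k}] are pairwise distinct.
   Hence [(f_{+-k})] and [(f^L_{+-k}, f^R_{+-k})] are orthonormal families of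
   size [2 l] in the [2 l]-dimensional real space [H], i.e. bases.  Expanding a
   pole function in both bases, its defining projections identify the
   [f_{+k}], [f^L_{-k}], [f^R_{-k}] components, which yields a linear relation
   in [H]; the theorem is its image under the real-linear map [phi]. *)

From Pilot Require Import Defs.
From HB Require Import structures.
From mathcomp Require Import all_boot all_order all_algebra.
From mathcomp Require Import complex.
From mathcomp Require Import reals trigo.
From mathcomp Require Import ring lra zify.
Import Order.TTheory GRing.Theory Num.Theory.
Local Open Scope ring_scope.
Local Open Scope complex_scope.
Set Implicit Arguments.
Unset Strict Implicit.
Unset Printing Implicit Defensive.

Local Notation Re := (@complex.Re _).
Local Notation Im := (@complex.Im _).

Section ComplexFacts.
Variable R : rcfType.
Implicit Types (k : R) (z w : R[i]).

(* [inner] and [phi] conjugate with [Num.conj], whereas [z^*] in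
   [complex_scope] is the convertible [conjc]; rewriting inside them needs the
   former. *)
Lemma conjC_real k : Num.conj k%:C = k%:C.
Proof. by apply: conj_Creal; apply/complex_realP; exists k. Qed.

Lemma Re_realM k z : Re (k%:C * z) = k * Re z.
Proof. by case: z => x y; simpc. Qed.

Lemma Im_realM k z : Im (k%:C * z) = k * Im z.
Proof. by case: z => x y; simpc. Qed.

Lemma Re_mulJ z w : Re (z * w^*) = Re z * Re w + Im z * Im w.
Proof. by case: z w => x y [u v]; simpc. Qed.

Lemma Im_mulJ z w : Im (z * w^*) = Im z * Re w - Re z * Im w.
Proof. by case: z w => x y [u v]; simpc => /=; ring. Qed.

Lemma Im_mulJ_collinear k k' z : Im ((k%:C * z) * (k'%:C * z)^*) = 0.
Proof. by rewrite Im_mulJ !Re_realM !Im_realM; ring. Qed.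

Lemma Re_mulJC z w : Re (z * w^*) = Re (w * z^*).
Proof. by rewrite !Re_mulJ; ring. Qed.

End ComplexFacts.

Section SHolomorphic.
Variable R : realType.
Local Notation C := R[i].
Local Notation half := (Defs.half R).

Let t : R := (sqrt2 R)^-1.

Let sqrt2_gt0 : 0 < sqrt2 R.
Proof. by rewrite /sqrt2 sqrtr_gt0 ltr0n. Qed.

Let t_sqr : 2 * t ^+ 2 = 1.
Proof.
by rewrite /t exprVn /sqrt2 sqr_sqrtr ?ler0n // mulfV // pnatr_eq0.
Qed.

Let sqrt_half_sqr : Num.sqrt (half ^+ 2 + half ^+ 2) = t.
Proof.
have t_ge0 : 0 <= t by rewrite invr_ge0 ltW // sqrt2_gt0.
rewrite -[RHS](ger0_norm t_ge0) -sqrtr_sqr; congr Num.sqrt.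
have := t_sqr; rewrite /Defs.half => ht.
have -> : t ^+ 2 = 2^-1 by lra.
by rewrite expr2; field.
Qed.

(* The coefficient [i |v - p| / (v - p)] of s-holomorphicity at the corner
   where [v - p = (e1 + i e2) / 2]. *)
Let corner_coef (e1 e2 : R) : e1 ^+ 2 = 1 -> e2 ^+ 2 = 1 ->
  let d : C := (e1 * half) +i* (e2 * half) in
  'i * `|d| / d = (e2 * t) +i* (e1 * t).
Proof.
move=> h1 h2 d.
have norm_d : `|d| = t%:C.
  by rewrite /d normc_def /= !exprMn h1 h2 !mul1r sqrt_half_sqr.
have d_neq0 : d != 0.
  by rewrite -normr_gt0 norm_d ltcR invr_gt0 sqrt2_gt0.
rewrite norm_d; apply: (canLR (mulfK d_neq0)).
apply/eqP; rewrite eq_complex /=; apply/andP; split; apply/eqP; first by ring.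
have -> : e2 * t * (e2 * half) + e1 * t * (e1 * half)
    = (e1 ^+ 2 + e2 ^+ 2) * t * half by ring.
by rewrite h1 h2 /Defs.half; field.
Qed.

(* Real part of the s-holomorphicity relation [z + c z^* = w + c w^*] at a
   corner of type [(sx, sy)], where [c = ((-1)^sy + i (-1)^sx) / sqrt 2] and
   [z], [w] are the values on the horizontal and the vertical edge. *)
Definition corner_relation (sx sy : bool) (z w : C) : Prop :=
  Re (z - w) + (-1) ^+ sy * t * Re (z - w) + (-1) ^+ sx * t * Im (z - w) = 0.

Lemma s_holomorphic_corner (F : C -> C) (a' b' x y : int) (sx sy : bool) :
  s_holomorphic a' b' F -> a' <= x <= b' ->
  let xp := if sx then x else x - 1 in let yp := if sy then y else y - 1 in
  a' <= xp -> xp < b' -> corner_relation sx sy (F (hedge R xp y)) (F (vedge R x yp)).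
Proof.
move=> hF hx xp yp hxp1 hxp2; have := hF x y sx sy hx hxp1 hxp2 => /=.
have sgn_sqr (s : bool) : ((-1) ^+ s : R) ^+ 2 = 1 by case: s; rewrite ?sqrrN expr1n.
have -> : (x%:~R +i* y%:~R - (xp%:~R + half) +i* (yp%:~R + half) : C)
    = ((-1) ^+ sx * half) +i* ((-1) ^+ sy * half).
  apply/eqP; rewrite eq_complex /=; apply/andP; split; apply/eqP;
    [rewrite /xp; case: (sx) | rewrite /yp; case: (sy)]; rewrite ?intrB /Defs.half /=; lra.
rewrite corner_coef // /corner_relation.
case: (F _) (F _) => [u1 u2] [w1 w2]; simpc => /= -[+ _]; lra.
Qed.

Let face_identity_real (la mu h1 h2 l1 l2 r1 r2 k1 k2 m1 m2 n1 n2 : R) :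
  h1 - l1 - t * (h1 - l1) - t * (h2 - l2) = 0 ->
  h1 - r1 - t * (h1 - r1) + t * (h2 - r2) = 0 ->
  la * h1 - l1 + t * (la * h1 - l1) - t * (la * h2 - l2) = 0 ->
  la * h1 - r1 + t * (la * h1 - r1) + t * (la * h2 - r2) = 0 ->
  k1 - m1 - t * (k1 - m1) - t * (k2 - m2) = 0 ->
  k1 - n1 - t * (k1 - n1) + t * (k2 - n2) = 0 ->
  mu * k1 - m1 + t * (mu * k1 - m1) - t * (mu * k2 - m2) = 0 ->
  mu * k1 - n1 + t * (mu * k1 - n1) + t * (mu * k2 - n2) = 0 ->
  (mu - la) * (h1 * k1 + h2 * k2) = - (r1 * n2) + r2 * n1 + (l1 * m2 - l2 * m1).
Proof.
set EA := (h1 - l1) + _ + _; set EB := (h1 - r1) + _ + _.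
set EC := (la * h1 - l1) + _ + _; set ED := (la * h1 - r1) + _ + _.
set GA := (k1 - m1) + _ + _; set GB := (k1 - n1) + _ + _.
set GC := (mu * k1 - m1) + _ + _; set GD := (mu * k1 - n1) + _ + _.
move=> eA eB eC eD gA gB gC gD; apply/eqP; rewrite -subr_eq0; apply/eqP.
(* a certificate: the difference lies in the ideal of the eight corner
   relations and of [2 t^2 - 1] *)
have -> : (mu - la) * (h1 * k1 + h2 * k2) - (- (r1 * n2) + r2 * n1 + (l1 * m2 - l2 * m1)) =
  (- k1 + 2 * k1 * t - k2 - 2 * k2 * t + m1 + m2 + n1 - n1 * t + n2 * t) * EA
  + (n1 * t + n1 + n2 * t) * EB
  + (k1 - 2 * k1 * t - k2 + 2 * k2 * t - 2 * n1 + 3 * n1 * t + n2 - n2 * t) * EC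
  + (- n1 + n1 * t - n2 * t) * ED
  + (h2 - l1 - h1 * t - l2 + h2 * t) * GA
  + (h1 - h1 * la - h2 * la - h1 * t - l1 - h2 * t + l2) * GB
  + (h1 - h1 * t - h2 * t) * GC + (h1 - h1 * t + h2 * t) * GD
  + (- 2 * k1 * l1 + h2 * k1 - h1 * k2 + 2 * k2 * l1 + 2 * l1 * n1 - l2 * n1
     - l1 * n2 + n1 * r2 - n2 * r1 + h1 * k1 * la - h2 * k1 * la + h1 * m2
     - h2 * m1 - h1 * k2 * la + h2 * k2 * la - 2 * h1 * la * n1 + h2 * la * n1
     + h1 * la * n2 + h1 * k1 * mu - h2 * k2 * mu) * (2 * t ^+ 2 - 1).
  by rewrite /EA /EB /EC /ED /GA /GB /GC /GD; ring.
by rewrite eA eB eC eD gA gB gC gD t_sqr subrr !mulr0 !addr0.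
Qed.

(* Around a face with bottom edge value [h], top edge value [la h] and
   vertical edge values [l], [r], for two s-holomorphic functions. *)
Lemma face_identity (la mu : R) (hF lF rF hG lG rG : C) :
  corner_relation true true hF lF -> corner_relation false true hF rF ->
  corner_relation true false (la%:C * hF) lF ->
  corner_relation false false (la%:C * hF) rF ->
  corner_relation true true hG lG -> corner_relation false true hG rG ->
  corner_relation true false (mu%:C * hG) lG ->
  corner_relation false false (mu%:C * hG) rG ->
  (mu - la) * Re (hF * hG^*) = Im (rF * rG^*) - Im (lF * lG^*).
Proof.
case: hF lF rF hG lG rG => [h1 h2] [l1 l2] [r1 r2] [k1 k2] [m1 m2] [n1 n2].
rewrite /corner_relation /= !expr0 !expr1 !mulN1r !mul1r; simpc.
exact: face_identity_real.
Qed.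

End SHolomorphic.

Section Strip.
Variable R : realType.
Local Notation C := R[i].
Variables (a' b' : int).

Lemma s_holomorphic_face_corners (F : C -> C) (la : R) (x : int) :
  s_holomorphic a' b' F -> a' <= x < b' ->
  F (hedge R x 1) = la%:C * F (hedge R x 0) ->
  let h := F (hedge R x 0) in let l := F (vedge R x 0) in
  let r := F (vedge R (x + 1) 0) in
  [/\ corner_relation true true h l, corner_relation false true h r,
      corner_relation true false (la%:C * h) l &
      corner_relation false false (la%:C * h) r].
Proof.
move=> hF /andP[x_ge x_lt] top h l r.
have x_in : a' <= x <= b' by rewrite x_ge ltW.
have x1_in : a' <= x + 1 <= b'.
  by apply/andP; split; [apply: (le_trans x_ge); rewrite lerDl | rewrite -ltzD1 ltrD2r].
have := @s_holomorphic_corner _ F a' b' x 0 true true hF x_in x_ge x_lt.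
have := @s_holomorphic_corner _ F a' b' x 1 true false hF x_in x_ge x_lt.
have := @s_holomorphic_corner _ F a' b' (x + 1) 0 false true hF x1_in.
have := @s_holomorphic_corner _ F a' b' (x + 1) 1 false false hF x1_in.
by rewrite /= addrK subrr -top => /(_ x_ge x_lt) ? /(_ x_ge x_lt) ? ? ?.
Qed.

Lemma s_holomorphic_face (F G : C -> C) (la mu : R) (x : int) :
  s_holomorphic a' b' F -> s_holomorphic a' b' G -> a' <= x < b' ->
  F (hedge R x 1) = la%:C * F (hedge R x 0) ->
  G (hedge R x 1) = mu%:C * G (hedge R x 0) ->
  (mu - la) * Re (F (hedge R x 0) * (G (hedge R x 0))^*) =
    Im (F (vedge R (x + 1) 0) * (G (vedge R (x + 1) 0))^*)
    - Im (F (vedge R x 0) * (G (vedge R x 0))^*).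
Proof.
move=> hF hG hx topF topG.
have [? ? ? ?] := s_holomorphic_face_corners hF hx topF.
have [? ? ? ?] := s_holomorphic_face_corners hG hx topG.
exact: face_identity.
Qed.

Lemma s_holomorphic_strip_orthogonal (F G : C -> C) (la mu : R) :
  a' < b' -> s_holomorphic a' b' F -> s_holomorphic a' b' G ->
  (forall x, a' <= x < b' -> F (hedge R x 1) = la%:C * F (hedge R x 0)) ->
  (forall x, a' <= x < b' -> G (hedge R x 1) = mu%:C * G (hedge R x 0)) ->
  riemann_bv a' b' F -> riemann_bv a' b' G ->
  (mu - la) * Re (\sum_(j < absz (b' - a'))
      F (hedge R (a' + j%:Z) 0) * (G (hedge R (a' + j%:Z) 0))^*) = 0.
Proof.
move=> ab hF hG topF topG bvF bvG.
have b'E : a' + (absz (b' - a'))%:Z = b'.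
  by rewrite gtz0_abs ?subr_gt0 // [a' + _]addrC subrK.
pose flux (j : nat) :=
  Im (F (vedge R (a' + j%:Z) 0) * (G (vedge R (a' + j%:Z) 0))^*).
rewrite raddf_sum mulr_sumr /=.
rewrite -(big_mkord xpredT (fun j => (mu - la) *
  Re (F (hedge R (a' + j%:Z) 0) * (G (hedge R (a' + j%:Z) 0))^*))).
rewrite (telescope_sumr_eq flux) // => [|j /andP[_ j_lt]].
  rewrite /flux b'E addr0.
  have [[r1 ->] [r2 ->]] := bvF 0; have [[r3 ->] [r4 ->]] := bvG 0.
  by rewrite !Im_mulJ_collinear subrr.
have hj : a' <= a' + j%:Z < b' by apply/andP; split; lia.
by rewrite s_holomorphic_face ?topF ?topG // /flux -addrA -PoszD addn1.
Qed.

End Strip.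

Section Eigenvalues.
Variable R : realType.
Local Notation half := (Defs.half R).

Definition transfer_eigenvalue (w : R) : R :=
  2 - cos w + Num.sqrt ((3 - cos w) * (1 - cos w)).

Definition signed_eigenvalue (plus : bool) (w : R) : R :=
  if plus then transfer_eigenvalue w else (transfer_eigenvalue w)^-1.

Lemma transfer_eigenvalue_gt1 (w : R) : 0 < w <= pi -> 1 < transfer_eigenvalue w.
Proof.
case/andP=> w_gt0 w_le; have : cos w < 1.
  by rewrite -cos0 ltr_cos // in_itv /= ?w_le ?(ltW w_gt0) ?lexx ?pi_ge0.
have := sqrtr_ge0 ((3 - cos w) * (1 - cos w)); rewrite /transfer_eigenvalue; lra.
Qed.

Lemma transfer_eigenvalue_lt (w w' : R) :
  0 <= w -> w < w' -> w' <= pi -> transfer_eigenvalue w < transfer_eigenvalue w'.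
Proof.
move=> w_ge0 ww' w'_le.
have cos_lt : cos w' < cos w.
  by rewrite ltr_cos // in_itv /= ?w_ge0 ?w'_le ?(le_trans (ltW ww')) ?(le_trans w_ge0 (ltW ww')).
have := cos_le1 w; have := cos_le1 w' => c1 c2.
have : Num.sqrt ((3 - cos w) * (1 - cos w)) <= Num.sqrt ((3 - cos w') * (1 - cos w')).
  by rewrite ler_sqrt; [apply: ler_pM; lra | apply: mulr_ge0; lra].
rewrite /transfer_eigenvalue; lra.
Qed.

Definition in_window (n m : nat) (w : R) : bool :=
  m%:R * pi / n%:R < w < (m%:R + half) * pi / n%:R.

Lemma in_window_0pi (n m : nat) (w : R) : (m < n)%N -> in_window n m w -> 0 < w <= pi.
Proof.
move=> mn /andP[w_gt w_lt]; have n_gt0 : 0 < n%:R :> R by rewrite ltr0n; lia.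
apply/andP; split.
  by apply: le_lt_trans w_gt; rewrite !mulr_ge0 ?pi_ge0 ?invr_ge0 ?ler0n.
apply: (le_trans (ltW w_lt)); rewrite ler_pdivrMr // [pi * _]mulrC.
have : m.+1%:R <= n%:R :> R by rewrite ler_nat.
rewrite -natr1 /Defs.half => ?; apply: ler_wpM2r; [exact: pi_ge0 | lra].
Qed.

Lemma in_window_lt (n m m' : nat) (w w' : R) : (m < m')%N ->
  in_window n m w -> in_window n m' w' -> w < w'.
Proof.
move=> mm' /andP[_ w_lt] /andP[w'_gt _]; apply: (lt_trans w_lt); apply: le_lt_trans w'_gt.
rewrite -!mulrA; apply: ler_wpM2r; first by rewrite mulr_ge0 ?pi_ge0 ?invr_ge0 ?ler0n.
have : m.+1%:R <= m'%:R :> R by rewrite ler_nat.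
rewrite -natr1 /Defs.half; lra.
Qed.

(* [lambda_{+k}] increases with [k] and exceeds [1 > lambda_{-k'}]. *)
Lemma signed_eigenvalue_inj (n m m' : nat) (s s' : bool) (w w' : R) :
  (m < n)%N -> (m' < n)%N -> (s, m) != (s', m') ->
  in_window n m w -> in_window n m' w' -> signed_eigenvalue s w != signed_eigenvalue s' w'.
Proof.
move=> mn m'n neq win w'in.
have [w_gt0 w_le] := andP (in_window_0pi mn win).
have [w'_gt0 w'_le] := andP (in_window_0pi m'n w'in).
have gt1 := transfer_eigenvalue_gt1 (in_window_0pi mn win).
have gt1' := transfer_eigenvalue_gt1 (in_window_0pi m'n w'in).
have neq_m : m != m' -> transfer_eigenvalue w != transfer_eigenvalue w'.
  case: (ltngtP m m') => // [mm'|m'm] _.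
  - by rewrite lt_eqF // transfer_eigenvalue_lt ?(ltW w_gt0) ?(in_window_lt mm' win w'in).
  - by rewrite gt_eqF // transfer_eigenvalue_lt ?(ltW w'_gt0) ?(in_window_lt m'm w'in win).
have inv_lt1 (x : R) : 1 < x -> x^-1 < 1 by move=> x_gt1; rewrite invf_lt1 // (lt_trans ltr01).
rewrite /signed_eigenvalue; case: s s' neq => [] [] neq.
- by apply: neq_m; apply: contra neq => /eqP ->.
- by rewrite gt_eqF // (lt_trans (inv_lt1 _ gt1') gt1).
- by rewrite lt_eqF // (lt_trans (inv_lt1 _ gt1) gt1').
- by rewrite (inj_eq (@invr_inj _)); apply: neq_m; apply: contra neq => /eqP ->.
Qed.

End Eigenvalues.

Section EigenOrthonormal.
Variable R : realType.
Local Notation C := R[i].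

Lemma hedge0_add_i (x : int) : hedge R x 0 + 'i * ((1 : int)%:~R : R)%:C = hedge R x 1.
Proof. by apply/eqP; rewrite eq_complex /= !mul0r !mulr1 !mul1r; simpc. Qed.

Lemma eigen_spec_orthonormal (a' b' : int) (n : nat) (F : bool -> 'I_n -> C -> C) :
  a' < b' -> n = absz (b' - a') -> (forall s (k : 'I_n), eigen_spec a' b' s k (F s k)) ->
  forall s (k : 'I_n) s' (k' : 'I_n),
    Re (\sum_(j < n) F s k (hedge R (a' + j%:Z) 0) * (F s' k' (hedge R (a' + j%:Z) 0))^*)
    = ((s, k) == (s', k'))%:R.
Proof.
move=> ab nE hF s k s' k'.
have [w [w_gt [w_lt [_ [holF [bvF [shF [_ [_ normF]]]]]]]]] := hF s k.
have [w' [w'_gt [w'_lt [_ [holG [bvG [shG _]]]]]]] := hF s' k'.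
case: eqP => [[<- <-]|neq].
  rewrite -[true%:R]/(Re (1 : C)) -normF nE; congr Re.
  by apply: eq_bigr => j _; rewrite sqr_normc.
have top (G : C -> C) (la : R) : (forall x y h : int, a' <= x -> x < b' ->
    G (hedge R x y + 'i * (h%:~R)%:C) = (la ^ h)%:C * G (hedge R x y)) ->
  forall x, a' <= x < b' -> G (hedge R x 1) = la%:C * G (hedge R x 0).
  by move=> shH x /andP[x_ge x_lt]; rewrite -hedge0_add_i shH // expr1z.
have := s_holomorphic_strip_orthogonal ab holF holG (top _ _ shF) (top _ _ shG) bvF bvG.
rewrite -nE => /eqP; rewrite mulf_eq0 subr_eq0 => /orP[/eqP eq_la|/eqP //].
have window (m : nat) (v : R) : m%:R * pi / (absz (b' - a'))%:R < v ->
    v < (m%:R + Defs.half R) * pi / (absz (b' - a'))%:R -> in_window n m v.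
  by move=> *; rewrite /in_window nE; apply/andP.
have neq_nat : (s, k : nat) != (s', k' : nat).
  by apply/eqP => -[es ek]; apply: neq; rewrite es (val_inj ek).
have := @signed_eigenvalue_inj R n k k' s s' w w' (ltn_ord k) (ltn_ord k') neq_nat
  (window _ _ w_gt w_lt) (window _ _ w'_gt w'_lt).
by rewrite /signed_eigenvalue /transfer_eigenvalue eq_la eqxx.
Qed.

End EigenOrthonormal.

Section FunctionSpace.
Variable R : realType.
Local Notation C := R[i].
Variables a b : int.
Local Notation H := (Hsp R a b).

Lemma inner_sym (f g : H) : inner f g = inner g f.
Proof. by rewrite /inner !raddf_sum; apply: eq_bigr => j _; rewrite /= Re_mulJC. Qed.

Lemma innerBl (f g h : H) : inner (f - g) h = inner f h - inner g h.
Proof.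
rewrite /inner -raddfB -sumrB; congr Re; apply: eq_bigr => j _.
by rewrite !ffunE mulrBl.
Qed.

Lemma inner_suml (I : finType) (c : I -> R) (e : I -> H) (f : H) :
  inner (\sum_i (c i)%:C *: e i) f = \sum_i c i * inner (e i) f.
Proof.
rewrite /inner (eq_bigr (fun j => \sum_i (c i)%:C * (e i j * (f j)^*))); last first.
  by move=> j _; rewrite sum_ffunE mulr_suml; apply: eq_bigr => i _; rewrite ffunE mulrA.
rewrite exchange_big raddf_sum; apply: eq_bigr => i _.
by rewrite -mulr_sumr /= Re_realM.
Qed.

Lemma restr_inner (a' b' : int) (F G : C -> C) : a <= a' -> a' <= b' -> b' <= b ->
  inner (restr a b a' b' F) (restr a b a' b' G) =
  Re (\sum_(j < absz (b' - a')) F (hedge R (a' + j%:Z) 0) * (G (hedge R (a' + j%:Z) 0))^*).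
Proof.
move=> aa' a'b' b'b; set m := absz (a' - a); set n := absz (b' - a').
pose E (j : nat) := F (hedge R (a + j%:Z) 0) * (G (hedge R (a + j%:Z) 0))^*.
have mn_le : (m + n <= ell a b)%N by rewrite /m /n /ell; lia.
rewrite /inner (eq_bigr (fun j : 'I_(ell a b) => if (m <= j < m + n)%N then E j else 0)).
  rewrite -big_mkcond.
  have -> : \sum_(i < ell a b | (m <= i < m + n)%N) E i = \sum_(m <= i < m + n) E i.
    by rewrite big_geq_mkord (big_ord_widen_cond _ _ _ mn_le); apply: eq_bigl => i.
  rewrite -{1}[m]add0n big_addn addKn big_mkord; congr Re; apply: eq_bigr => j _.
  by rewrite /E (_ : a + (j + m)%N%:Z = a' + j%:Z) //; rewrite /m; lia.
move=> j _; rewrite !ffunE.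
have -> : (a' <= a + (j : nat)%:Z) && (a + (j : nat)%:Z < b') = (m <= j < m + n)%N.
  by rewrite /m /n; apply/idP/idP; lia.
by case: ifP; rewrite ?mul0r.
Qed.

Lemma restr_inner_disjoint (a1 b1 a2 b2 : int) (F G : C -> C) : b1 <= a2 ->
  inner (restr a b a1 b1 F) (restr a b a2 b2 G) = 0.
Proof.
move=> b1a2; rewrite /inner big1 ?raddf0 // => j _; rewrite !ffunE.
case: ifP => [/andP[_ lt_b1]|_]; last by rewrite mul0r.
rewrite ifF ?conjC0 ?mulr0 //.
by apply/negbTE; rewrite negb_and -ltNge (lt_le_trans lt_b1 b1a2).
Qed.

Definition inner_orthonormal (I : finType) (e : I -> H) : Prop :=
  forall i j, inner (e i) (e j) = (i == j)%:R.

Definition oproj (I : finType) (e : I -> H) (x : H) : H :=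
  \sum_i (inner (e i) x)%:C *: e i.

Lemma inner_orthonormal_uncurry (n : nat) (e : bool -> 'I_n -> H) (s : bool) :
  inner_orthonormal (uncurry e) -> inner_orthonormal (e s).
Proof. by move=> ON k k'; rewrite (ON (s, k) (s, k')) xpair_eqE eqxx. Qed.

Definition join_family (I J : finType) (eL : I -> H) (eR : J -> H) (q : I + J) : H :=
  match q with inl i => eL i | inr j => eR j end.

Lemma inner_orthonormal_join (I J : finType) (eL : I -> H) (eR : J -> H) :
  inner_orthonormal eL -> inner_orthonormal eR -> (forall i j, inner (eL i) (eR j) = 0) ->
  inner_orthonormal (join_family eL eR).
Proof. by move=> ONL ONR LR [i|j] [i'|j'] //=; rewrite ?ONL ?ONR ?LR // inner_sym LR. Qed.

Lemma oproj_uncurry (n : nat) (e : bool -> 'I_n -> H) (x : H) :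
  oproj (uncurry e) x = oproj (e true) x + oproj (e false) x.
Proof.
rewrite /oproj (eq_bigr (fun p => (inner (e p.1 p.2) x)%:C *: e p.1 p.2)) => [|[] //].
by rewrite -(pair_bigA _ (fun s k => (inner (e s k) x)%:C *: e s k)) big_bool.
Qed.

Lemma oproj_join (I J : finType) (eL : I -> H) (eR : J -> H) (x : H) :
  oproj (join_family eL eR) x = oproj eL x + oproj eR x.
Proof. by rewrite /oproj big_sumType. Qed.

Lemma is_orth_proj_oproj (n : nat) (S : 'I_n -> H) (p q : H) :
  inner_orthonormal S -> is_orth_proj S p q -> oproj S p = q.
Proof.
move=> ON [[c ->] orth]; apply: eq_bigr => i _; congr (_%:C *: _).
have /eqP := orth i; rewrite innerBl subr_eq0 => /eqP.
rewrite inner_sym => ->; rewrite inner_suml (bigD1 i) //= ON eqxx mulr1 big1 ?addr0 //.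
by move=> j ji; rewrite ON (negbTE ji) mulr0.
Qed.

End FunctionSpace.

Lemma mx_orthonormal_complete (K : comUnitRingType) (N : nat) (I : finType)
    (e : I -> 'rV[K]_N) :
  #|I| = N -> (forall i j, (e i *m (e j)^T) 0 0 = (i == j)%:R) ->
  forall y : 'rV_N, y = \sum_i (y *m (e i)^T) 0 0 *: e i.
Proof.
move=> cardI ON y.
pose g (k : 'I_N) : I := enum_val (cast_ord (esym cardI) k).
pose g' (i : I) : 'I_N := cast_ord cardI (enum_rank i).
have gK : cancel g g' by move=> k; rewrite /g /g' enum_valK cast_ordKV.
have g'K : cancel g' g by move=> i; rewrite /g /g' cast_ordK enum_rankK.
pose E : 'M[K]_N := \matrix_(k, j) e (g k) 0 j.
have EEt : E *m E^T = 1%:M.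
  apply/matrixP => k l; rewrite !mxE -(inj_eq (can_inj gK)) -ON mxE.
  by apply: eq_bigr => j _; rewrite !mxE.
rewrite -{1}(mulmx1 y) -(mulmx1C EEt) mulmxA mulmx_sum_row.
rewrite (reindex g'); last by exists g => i _; [exact: g'K | exact: gK].
apply: eq_bigr => i _; have -> : row (g' i) E = e i by apply/rowP => j; rewrite !mxE g'K.
by congr (_ *: _); rewrite !mxE; apply: eq_bigr => j _; rewrite !mxE g'K.
Qed.

Section RealCoordinates.
Variable R : realType.
Variables a b : int.
Local Notation H := (Hsp R a b).
Local Notation l := (ell a b).

Definition real_coords (f : H) : 'rV[R]_(l + l) :=
  row_mx (\row_j Re (f j)) (\row_j Im (f j)).

Lemma real_coords_inj : injective real_coords.
Proof.
move=> f g /eq_row_mx[eRe eIm]; apply/ffunP => j.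
have := congr1 (fun r : 'rV_l => r 0 j) eRe; have := congr1 (fun r : 'rV_l => r 0 j) eIm.
by rewrite !mxE; case: (f j) (g j) => [? ?] [? ?] /= -> ->.
Qed.

Lemma real_coords_dot (f g : H) :
  (real_coords f *m (real_coords g)^T) 0 0 = inner f g.
Proof.
rewrite tr_row_mx mul_row_col !mxE /inner raddf_sum -big_split /=.
by apply: eq_bigr => j _; rewrite !mxE Re_mulJ.
Qed.

Lemma real_coords_sum (I : finType) (c : I -> R) (e : I -> H) :
  real_coords (\sum_i (c i)%:C *: e i) = \sum_i c i *: real_coords (e i).
Proof.
apply/rowP => k; rewrite summxE; case: (split_ordP k) => j ->;
  rewrite ?row_mxEl ?row_mxEr mxE sum_ffunE raddf_sum;
  by apply: eq_bigr => i _; rewrite mxE ?row_mxEl ?row_mxEr mxE ffunE /= ?Re_realM ?Im_realM.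
Qed.

Lemma oproj_complete (I : finType) (e : I -> H) :
  inner_orthonormal e -> #|I| = (l + l)%N -> forall x, oproj e x = x.
Proof.
move=> ON cardI x; apply: real_coords_inj; rewrite real_coords_sum.
rewrite [RHS](@mx_orthonormal_complete R _ I (real_coords \o e) cardI) => [|i j].
  by apply: eq_bigr => i _; rewrite real_coords_dot inner_sym.
by rewrite real_coords_dot ON.
Qed.

End RealCoordinates.

Section Modes.
Variable R : realType.
Local Notation C := R[i].
Variables a b : int.
Local Notation H := (Hsp R a b).

Lemma phiD (f g : H) (v : Vt R a b) : phi (f + g) v = phi f v + phi g v.
Proof.
rewrite /phi -scalerDr -big_split; congr (_ *: _); apply: eq_bigr => j _ /=.
by rewrite ffunE rmorphD !mulrDr !scalerDl opprD addrACA.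
Qed.

Lemma phiZ (c : R) (f : H) (v : Vt R a b) : phi (c%:C *: f) v = c%:C *: phi f v.
Proof.
rewrite /phi [RHS]scalerA [c%:C * _]mulrC -[RHS]scalerA; congr (_ *: _).
rewrite scaler_sumr; apply: eq_bigr => j _.
rewrite ffunE -[c%:C *: f j]/(c%:C * f j) rmorphM /= conjC_real.
by rewrite scalerBr !scalerA !(mulrCA 'i).
Qed.

Lemma phi0 (v : Vt R a b) : phi 0 v = 0.
Proof. by rewrite -(scale0r (0 : H)) -[0 : C]/(0%:C) phiZ scale0r. Qed.

Lemma phiB (f g : H) (v : Vt R a b) : phi (f - g) v = phi f v - phi g v.
Proof.
have N1 : (-1 : C) = (-1)%:C by rewrite rmorphN1.
by rewrite -scaleN1r N1 phiD phiZ -N1 scaleN1r.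
Qed.

Lemma phi_oproj (I : finType) (e : I -> H) (x : H) (v : Vt R a b) :
  phi (oproj e x) v = \sum_i (inner (e i) x)%:C *: phi (e i) v.
Proof.
rewrite /oproj (big_morph (fun f => phi f v) (fun f g => phiD f g v) (phi0 v)).
by apply: eq_bigr => i _; rewrite phiZ.
Qed.

Lemma oproj_pole_relation (nT nL nR : nat) (eT : bool -> 'I_nT -> H)
    (eL : bool -> 'I_nL -> H) (eR : bool -> 'I_nR -> H) (x : H) :
  inner_orthonormal (uncurry eT) ->
  inner_orthonormal (join_family (uncurry eL) (uncurry eR)) ->
  nT = ell a b -> (nL + nR)%N = ell a b ->
  oproj (eT true) x - oproj (eL false) x - oproj (eR false) x =
  oproj (eL true) x + oproj (eR true) x - oproj (eT false) x.
Proof.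
move=> ONT ONLR nTE nLRE.
have cardT : #|{: bool * 'I_nT}| = (ell a b + ell a b)%N.
  by rewrite card_prod card_bool card_ord nTE addnn mul2n.
have cardLR : #|{: (bool * 'I_nL) + (bool * 'I_nR)}| = (ell a b + ell a b)%N.
  by rewrite card_sum !card_prod card_bool !card_ord; lia.
have := oproj_complete ONT cardT x; have := oproj_complete ONLR cardLR x.
rewrite oproj_join !oproj_uncurry => /ffunP xLR /ffunP xT.
apply/ffunP => j; move: (xT j) (xLR j); rewrite !ffunE => xTj xLRj.
apply/eqP; rewrite -subr_eq0 -(subrr (x j)) {1}(esym xTj) -xLRj; apply/eqP; ring.
Qed.

Lemma mode_pole_expansion (nT nL nR : nat) (eT : bool -> 'I_nT -> H)
    (eL : bool -> 'I_nL -> H) (eR : bool -> 'I_nR -> H) (x yT yL yR : H) (v : Vt R a b) :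
  inner_orthonormal (uncurry eT) -> inner_orthonormal (uncurry eL) ->
  inner_orthonormal (uncurry eR) -> (forall i j, inner (uncurry eL i) (uncurry eR j) = 0) ->
  nT = ell a b -> (nL + nR)%N = ell a b ->
  is_orth_proj (eT true) x yT -> is_orth_proj (eL false) x yL ->
  is_orth_proj (eR false) x yR ->
  phi yT v - phi yL v - phi yR v =
    - (\sum_i (inner (eT false i) x)%:C *: phi (eT false i) v)
    + (\sum_i (inner (eL true i) x)%:C *: phi (eL true i) v)
    + (\sum_i (inner (eR true i) x)%:C *: phi (eR true i) v).
Proof.
move=> ONT ONL ONR LR nTE nLRE.
move=> /(is_orth_proj_oproj (inner_orthonormal_uncurry true ONT)) <-.
move=> /(is_orth_proj_oproj (inner_orthonormal_uncurry false ONL)) <-.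
move=> /(is_orth_proj_oproj (inner_orthonormal_uncurry false ONR)) <-.
have := oproj_pole_relation x ONT (inner_orthonormal_join ONL ONR LR) nTE nLRE.
move/(congr1 (fun g => phi g v)); rewrite !phiB phiD !phi_oproj => ->.
by rewrite (addrC (_ + _)) addrA.
Qed.

End Modes.

Lemma restr_eigen_orthonormal (R : realType) (a b a' b' : int) (n : nat)
    (F : bool -> 'I_n -> R[i] -> R[i]) :
  a <= a' -> a' < b' -> b' <= b -> n = absz (b' - a') ->
  (forall s (k : 'I_n), eigen_spec a' b' s k (F s k)) ->
  inner_orthonormal (uncurry (fun s k => restr a b a' b' (F s k))).
Proof.
move=> aa' a'b' b'b nE hF [s k] [s' k'].
rewrite /= restr_inner ?(ltW a'b') // -nE.
exact: eigen_spec_orthonormal a'b' nE hF s k s' k'.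
Qed.

Unset Implicit Arguments.

Theorem lemma5p18 (R : realType) (a b : int) (ha : a < 0) (hb : 0 < b)
  (FT : bool -> 'I_(absz (b - a)) -> R[i] -> R[i])
  (FL : bool -> 'I_(absz (- a)) -> R[i] -> R[i])
  (FR : bool -> 'I_(absz b) -> R[i] -> R[i])
  (hFT : forall s (k : 'I_(absz (b - a))), eigen_spec a b s k (FT s k))
  (hFL : forall s (k : 'I_(absz (- a))), eigen_spec a 0 s k (FL s k))
  (hFR : forall s (k : 'I_(absz b)), eigen_spec 0 b s k (FR s k))
  (pT : 'I_(absz (b - a)) -> Hsp R a b)
  (pL : 'I_(absz (- a)) -> Hsp R a b)
  (pR : 'I_(absz b) -> Hsp R a b) :
  let f := fun s k => restr a b a b (FT s k) in
  let fL := fun s k => restr a b a 0 (FL s k) in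
  let fR := fun s k => restr a b 0 b (FR s k) in
  (forall k, is_orth_proj (f true) (pT k) (f true k) /\
             is_orth_proj (fL false) (pT k) 0 /\
             is_orth_proj (fR false) (pT k) 0) ->
  (forall k, is_orth_proj (f true) (pL k) 0 /\
             is_orth_proj (fL false) (pL k) (fL false k) /\
             is_orth_proj (fR false) (pL k) 0) ->
  (forall k, is_orth_proj (f true) (pR k) 0 /\
             is_orth_proj (fL false) (pR k) 0 /\
             is_orth_proj (fR false) (pR k) (fR false k)) ->
  [/\ forall (k : 'I_(absz (b - a))) (v : Vt R a b),
        phi (f true k) v =
          - (\sum_(k' < absz (b - a)) (inner (f false k') (pT k))%:C *: phi (f false k') v)
          + (\sum_(k' < absz (- a)) (inner (fL true k') (pT k))%:C *: phi (fL true k') v)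
          + (\sum_(k' < absz b) (inner (fR true k') (pT k))%:C *: phi (fR true k') v),
      forall (k : 'I_(absz (- a))) (v : Vt R a b),
        phi (fL false k) v =
          (\sum_(k' < absz (b - a)) (inner (f false k') (pL k))%:C *: phi (f false k') v)
          - (\sum_(k' < absz (- a)) (inner (fL true k') (pL k))%:C *: phi (fL true k') v)
          - (\sum_(k' < absz b) (inner (fR true k') (pL k))%:C *: phi (fR true k') v) &
      forall (k : 'I_(absz b)) (v : Vt R a b),
        phi (fR false k) v =
          (\sum_(k' < absz (b - a)) (inner (f false k') (pR k))%:C *: phi (f false k') v)
          - (\sum_(k' < absz (- a)) (inner (fL true k') (pR k))%:C *: phi (fL true k') v)
          - (\sum_(k' < absz b) (inner (fR true k') (pR k))%:C *: phi (fR true k') v)].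
Proof.
move=> f fL fR HT HL HR.
have ONT : inner_orthonormal (uncurry f).
  exact: restr_eigen_orthonormal (lexx a) (lt_trans ha hb) (lexx b) (erefl _) hFT.
have ONL : inner_orthonormal (uncurry fL).
  by apply: restr_eigen_orthonormal (lexx a) ha (ltW hb) _ hFL; rewrite sub0r.
have ONR : inner_orthonormal (uncurry fR).
  by apply: restr_eigen_orthonormal (ltW ha) hb (lexx b) _ hFR; rewrite subr0.
have LR i j : inner (uncurry fL i) (uncurry fR j) = 0.
  by case: i j => [? ?] [? ?]; exact: restr_inner_disjoint.
have nLRE : (absz (- a) + absz b)%N = ell a b by rewrite /ell; lia.
have expansion := mode_pole_expansion _ ONT ONL ONR LR (erefl _) nLRE.
split=> k v.
- have [pTT [pTL pTR]] := HT k.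
  by have := expansion _ _ _ _ v pTT pTL pTR; rewrite phi0 subr0 subr0.
- have [pLT [pLL pLR]] := HL k.
  have := expansion _ _ _ _ v pLT pLL pLR; rewrite phi0 subr0 sub0r.
  by move/eqP; rewrite eqr_oppLR => /eqP->; rewrite !opprD opprK.
- have [pRT [pRL pRR]] := HR k.
  have := expansion _ _ _ _ v pRT pRL pRR; rewrite phi0 subrr sub0r.
  by move/eqP; rewrite eqr_oppLR => /eqP->; rewrite !opprD opprK.
Qed.
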